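(* Let $A\in\mathbb{R}^{m\times n}$, $b\in\mathbb{R}^m$, let $L\in\mathbb{R}^{s\times n}$ have full column rank, and let $W_1,\dots,W_M\in\mathbb{R}^{m\times\ell}$ satisfy $\sum_{i=1}^M W_iW_i^\top=I_m$. Let $\tau(1),\tau(2),\dots$ be random variables with values in $\{1,\dots,M\}$ such that for each $j\in\mathbb{N}_0$, $(\tau(jM+1),\dots,\tau((j+1)M))$ is a (random) permutation of $\{1,\dots,M\}$ (random cyclic sampling). Write $A_{\tau(k)}=W_{\tau(k)}^\top A$, $b_{\tau(k)}=W_{\tau(k)}^\top b$. (i) Let $\lambda>0$, $y_0=0$, and define $$y_k = y_{k-1} - B_kA_{\tau(k)}^\top(A_{\tau(k)}y_{k-1}-b_{\tau(k)}),\qquad B_k=\Big(\lambda L^\top L+\sum_{i=1}^kA_{\tau(i)}^\top A_{\tau(i)}\Big)^{-1}.$$ Then for every $j\in\mathbb{N}$, $y_{jM}=x(\lambda/j)$. (ii) Let $\Lambda_1,\Lambda_2,\dots$ be real numbers with $\lambda_k=\sum_{i=1}^k\Lambda_i>0$ for all $k$, let $x_0\in\mathbb{R}^n$ be arbitrary, and define $$x_k = x_{k-1}-B_k\big(A_{\tau(k)}^\top(A_{\tau(k)}x_{k-1}-b_{\tau(k)})+\Lambda_kL^\top Lx_{k-1}\big),\qquad B_k=\Big(\sum_{i=1}^k\Lambda_iL^\top L+\sum_{i=1}^kA_{\tau(i)}^\top A_{\tau(i)}\Big)^{-1}.$$ Then for every $j\in\mathbb{N}$, $x_{jM}=x(\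lambda_{jM}/j)$.
   Context: For $\mu>0$, $x(\mu)=(A^\top A+\mu L^\top L)^{-1}A^\top b$ denotes the Tikhonov-regularized solution of $\min_x\|Ax-b\|_2^2+\mu\|Lx\|_2^2$. *)

From HB Require Import structures.
From mathcomp Require Import all_boot all_order all_algebra.
Set Implicit Arguments. Unset Strict Implicit. Unset Printing Implicit Defensive.
Import Order.TTheory GRing.Theory Num.Theory.
Local Open Scope ring_scope.

Definition tikh (R : realFieldType) (m n s : nat)
  (A : 'M[R]_(m, n)) (L : 'M[R]_(s, n)) (b : 'cV[R]_m) (mu : R) : 'cV[R]_n :=
  invmx (A^T *m A + mu *: (L^T *m L)) *m (A^T *m b).

Definition Ablk (R : realFieldType) (m n l M : nat) (A : 'M[R]_(m, n))
  (W : 'I_M -> 'M[R]_(m, l)) (tau : nat -> 'I_M) (k : nat) : 'M[R]_(l, n) :=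
  (W (tau k))^T *m A.
Definition bblk (R : realFieldType) (m l M : nat) (b : 'cV[R]_m)
  (W : 'I_M -> 'M[R]_(m, l)) (tau : nat -> 'I_M) (k : nat) : 'cV[R]_l :=
  (W (tau k))^T *m b.

(* Random cyclic sampling (pathwise): for every j, (tau(jM+1),...,tau((j+1)M))
   is a permutation of {1,...,M} (here of 'I_M). *)
Definition cyclic_sampling (M : nat) (tau : nat -> 'I_M) : Prop :=
  forall j : nat, perm_eq [seq tau (j * M + k)%N | k <- iota 1 M] (enum 'I_M).

Definition AtA_sum (R : realFieldType) (m n l M : nat) (A : 'M[R]_(m, n))
  (W : 'I_M -> 'M[R]_(m, l)) (tau : nat -> 'I_M) (k : nat) : 'M[R]_n :=
  \sum_(1 <= i < k.+1) (Ablk A W tau i)^T *m Ablk A W tau i.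

Fixpoint yseq (R : realFieldType) (m n s l M : nat) (A : 'M[R]_(m, n))
  (b : 'cV[R]_m) (L : 'M[R]_(s, n)) (W : 'I_M -> 'M[R]_(m, l))
  (tau : nat -> 'I_M) (lam : R) (k : nat) : 'cV[R]_n :=
  match k with
  | 0 => 0
  | k'.+1 =>
      let y := yseq A b L W tau lam k' in
      let Bk := invmx (lam *: (L^T *m L) + AtA_sum A W tau k) in
      y - Bk *m ((Ablk A W tau k)^T *m (Ablk A W tau k *m y - bblk b W tau k))
  end.

Definition lamseq (R : realFieldType) (Lam : nat -> R) (k : nat) : R :=
  \sum_(1 <= i < k.+1) Lam i.

Fixpoint xseq (R : realFieldType) (m n s l M : nat) (A : 'M[R]_(m, n))
  (b : 'cV[R]_m) (L : 'M[R]_(s, n)) (W : 'I_M -> 'M[R]_(m, l))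
  (tau : nat -> 'I_M) (Lam : nat -> R) (x0 : 'cV[R]_n) (k : nat) : 'cV[R]_n :=
  match k with
  | 0 => x0
  | k'.+1 =>
      let x := xseq A b L W tau Lam x0 k' in
      let Bk := invmx ((\sum_(1 <= i < k.+1) Lam i *: (L^T *m L))
                       + AtA_sum A W tau k) in
      x - Bk *m ((Ablk A W tau k)^T *m (Ablk A W tau k *m x - bblk b W tau k)
                 + Lam k *: ((L^T *m L) *m x))
  end.

From HB Require Import structures.
From mathcomp Require Import all_boot all_order all_algebra.
From mathcomp Require Import zify.
Set Implicit Arguments. Unset Strict Implicit. Unset Printing Implicit Defensive.
Import Order.TTheory GRing.Theory Num.Theory.
Local Open Scope ring_scope.

(* Both iterations are recursive least squares: writing G_k for the matrix
   inverted in B_k and r_k = sum_{i<=k} A_tau(i)^T b_tau(i), each step is exactly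
   the update that carries the normal equation G_{k-1} z = r_{k-1} to
   G_k z = r_k, so every iterate solves its normal equation (for (ii) the
   correction Lambda_k L^T L x_{k-1} is what makes G_k gain Lambda_k L^T L, and
   G_0 = 0 makes x_0 irrelevant).  A sweep of cyclic sampling visits every block
   once, so sum_i W_i W_i^T = I gives G_{jM} = c L^T L + j A^T A and
   r_{jM} = j A^T b; divided by j this is the normal equation of x(c / j), and
   full column rank of L makes the matrix invertible. *)

Section PositiveSemidefinite.
Variable R : realFieldType.

Definition psdmx n (Q : 'M[R]_n) := forall u : 'rV[R]_n, 0 <= (u *m Q *m u^T) 0 0.

Lemma psdmx_add n (P Q : 'M[R]_n) : psdmx P -> psdmx Q -> psdmx (P + Q).
Proof. by move=> hP hQ u; rewrite mulmxDr mulmxDl mxE addr_ge0. Qed.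

Lemma psdmx_sum n (I : Type) (r : seq I) (P : pred I) (F : I -> 'M[R]_n) :
  (forall i, psdmx (F i)) -> psdmx (\sum_(i <- r | P i) F i).
Proof.
move=> hF; apply: (big_ind (@psdmx n)) => // [u|]; last exact: psdmx_add.
by rewrite mulmx0 mul0mx mxE.
Qed.

Lemma gram_qf p n (C : 'M[R]_(p, n)) (u : 'rV[R]_n) :
  (u *m (C^T *m C) *m u^T) 0 0 = \sum_i (u *m C^T) 0 i ^+ 2.
Proof.
have -> : u *m (C^T *m C) *m u^T = (u *m C^T) *m (u *m C^T)^T.
  by rewrite trmx_mul trmxK !mulmxA.
by rewrite mxE; apply: eq_bigr => i _; rewrite [_^T i 0]mxE expr2.
Qed.

Lemma psdmx_gram p n (C : 'M[R]_(p, n)) : psdmx (C^T *m C).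
Proof. by move=> u; rewrite gram_qf; apply: sumr_ge0 => i _; exact: sqr_ge0. Qed.

Lemma gram_qf_eq0 p n (C : 'M[R]_(p, n)) (u : 'rV[R]_n) :
  (u *m (C^T *m C) *m u^T) 0 0 = 0 -> u *m C^T = 0.
Proof.
rewrite gram_qf => /psumr_eq0P sq0; apply/matrixP => i j; rewrite ord1 [RHS]mxE.
by apply/eqP; rewrite -sqrf_eq0; apply/eqP/sq0 => // k _; exact: sqr_ge0.
Qed.

Lemma unitmx_scale_gram_add s n (L : 'M[R]_(s, n)) (mu : R) (S : 'M[R]_n) :
  \rank L = n -> 0 < mu -> psdmx S -> mu *: (L^T *m L) + S \in unitmx.
Proof.
move=> rankL mu_gt0 psdS.
rewrite -row_free_unit -kermx_eq0; apply/rowV0P => u /sub_kermxP uG0.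
have : (u *m (mu *: (L^T *m L) + S) *m u^T) 0 0 = 0 by rewrite uG0 mul0mx mxE.
rewrite mulmxDr mulmxDl mxE -scalemxAr -scalemxAl mxE => /eqP.
rewrite paddr_eq0 ?mulr_ge0 ?(ltW mu_gt0) ?psdmx_gram ?psdS // mulf_eq0 gt_eqF //=.
case/andP=> /eqP /gram_qf_eq0 uLt0 _.
apply/eqP; rewrite -(mulmx_free_eq0 _ (B := L^T)) ?uLt0 //.
by rewrite /row_free mxrank_tr rankL.
Qed.

End PositiveSemidefinite.

Lemma normal_eq_update (R : comUnitRingType) n (G D : 'M[R]_n) (r d z : 'cV[R]_n) :
  G + D \in unitmx -> G *m z = r ->
  (G + D) *m (z - invmx (G + D) *m (D *m z - d)) = r + d.
Proof.
move=> GDu Gz; rewrite mulmxBr mulmxA mulmxV // mul1mx mulmxDl Gz.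
by rewrite addrKA opprK.
Qed.

Lemma sum_cyclic_sampling (V : nmodType) M (tau : nat -> 'I_M) (F : 'I_M -> V) j :
  cyclic_sampling tau -> \sum_(1 <= i < (j * M).+1) F (tau i) = (\sum_i F i) *+ j.
Proof.
move=> cs; elim: j => [|j IH]; first by rewrite mul0n big_geq.
rewrite mulSnr (big_cat_nat _ (n := (j * M).+1)) //=; last by lia.
rewrite IH mulrSr; congr (_ + _).
rewrite -add1n big_addn.
have -> : ((j * M + M).+1 - j * M = M.+1)%N by lia.
rewrite /index_iota subSS subn0 -big_enum -(perm_big _ (cs j)) big_map.
by apply: eq_bigr => i _; rewrite addnC.
Qed.

Section CyclicSweeps.
Variables (R : realFieldType) (m n l M : nat).
Variables (A : 'M[R]_(m, n)) (W : 'I_M -> 'M[R]_(m, l)) (tau : nat -> 'I_M).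
Hypothesis tight_frame : \sum_(i < M) W i *m (W i)^T = 1%:M.
Hypothesis cyclic : cyclic_sampling tau.

Lemma sum_blocks_cyclic p (C : 'M[R]_(m, p)) j :
  \sum_(1 <= i < (j * M).+1) (Ablk A W tau i)^T *m ((W (tau i))^T *m C)
  = (A^T *m C) *+ j.
Proof.
rewrite (sum_cyclic_sampling (fun k => ((W k)^T *m A)^T *m ((W k)^T *m C))) //.
congr (_ *+ _); rewrite -[A^T]mulmx1 -tight_frame.
rewrite mulmx_sumr mulmx_suml; apply: eq_bigr => i _.
by rewrite trmx_mul trmxK !mulmxA.
Qed.

Lemma AtA_sum_cyclic j : AtA_sum A W tau (j * M) = (A^T *m A) *+ j.
Proof. exact: sum_blocks_cyclic. Qed.

Lemma Atb_sum_cyclic (b : 'cV[R]_m) j :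
  \sum_(1 <= i < (j * M).+1) (Ablk A W tau i)^T *m bblk b W tau i = (A^T *m b) *+ j.
Proof. exact: sum_blocks_cyclic. Qed.

End CyclicSweeps.

Section NormalEquations.
Variables (R : realFieldType) (m n s l M : nat).
Variables (A : 'M[R]_(m, n)) (b : 'cV[R]_m) (L : 'M[R]_(s, n)).
Variables (W : 'I_M -> 'M[R]_(m, l)) (tau : nat -> 'I_M).
Hypothesis rankL : \rank L = n.

Let Ak := Ablk A W tau.
Let rhs k := \sum_(1 <= i < k.+1) (Ak i)^T *m bblk b W tau i.

Lemma AtA_sumS k : AtA_sum A W tau k.+1 = AtA_sum A W tau k + (Ak k.+1)^T *m Ak k.+1.
Proof. by rewrite /AtA_sum big_nat_recr. Qed.

Lemma psdmx_AtA_sum k : psdmx (AtA_sum A W tau k).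
Proof. by apply: psdmx_sum => i; exact: psdmx_gram. Qed.

Lemma yseq_normal_eq lam : 0 < lam -> forall k,
  (lam *: (L^T *m L) + AtA_sum A W tau k) *m yseq A b L W tau lam k = rhs k.
Proof.
move=> lam_gt0; elim=> [|k IH]; first by rewrite mulmx0 /rhs big_geq.
have step (z : 'cV[R]_n) : (Ak k.+1)^T *m (Ak k.+1 *m z - bblk b W tau k.+1)
    = (Ak k.+1)^T *m Ak k.+1 *m z - (Ak k.+1)^T *m bblk b W tau k.+1.
  by rewrite mulmxBr mulmxA.
rewrite /= step [rhs _]big_nat_recr //= AtA_sumS addrA.
apply: normal_eq_update => //; rewrite -addrA -AtA_sumS.
exact: unitmx_scale_gram_add (psdmx_AtA_sum _).
Qed.

Lemma xseq_normal_eq (Lam : nat -> R) (x0 : 'cV[R]_n) :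
  (forall k, (1 <= k)%N -> 0 < lamseq Lam k) -> forall k,
  (lamseq Lam k *: (L^T *m L) + AtA_sum A W tau k) *m xseq A b L W tau Lam x0 k
  = rhs k.
Proof.
move=> lam_gt0; elim=> [|k IH].
  by rewrite /lamseq /AtA_sum /rhs !big_geq // scale0r add0r mul0mx.
have splitG : lamseq Lam k.+1 *: (L^T *m L) + AtA_sum A W tau k.+1 =
    (lamseq Lam k *: (L^T *m L) + AtA_sum A W tau k)
    + (Lam k.+1 *: (L^T *m L) + (Ak k.+1)^T *m Ak k.+1).
  by rewrite AtA_sumS /lamseq big_nat_recr //= scalerDl addrACA.
have step (z : 'cV[R]_n) :
    (Ak k.+1)^T *m (Ak k.+1 *m z - bblk b W tau k.+1) + Lam k.+1 *: (L^T *m L *m z)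
    = (Lam k.+1 *: (L^T *m L) + (Ak k.+1)^T *m Ak k.+1) *m z
      - (Ak k.+1)^T *m bblk b W tau k.+1.
  by rewrite mulmxBr mulmxDl -scalemxAl mulmxA addrC addrA.
rewrite /= -scaler_suml -/(lamseq Lam k.+1) splitG [rhs _]big_nat_recr //= step.
apply: normal_eq_update => //; rewrite -splitG.
exact/unitmx_scale_gram_add/psdmx_AtA_sum/lam_gt0.
Qed.

Lemma tikh_of_normal_eq (c : R) (j : nat) (z : 'cV[R]_n) :
  0 < c -> (0 < j)%N ->
  (c *: (L^T *m L) + (A^T *m A) *+ j) *m z = (A^T *m b) *+ j ->
  z = tikh A L b (c / j%:R).
Proof.
move=> c_gt0 j_gt0 Gz.
have j_neq0 : (j%:R : R) != 0 by rewrite pnatr_eq0 -lt0n.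
set Q := A^T *m A + (c / j%:R) *: (L^T *m L).
have Qu : Q \in unitmx.
  rewrite /Q addrC unitmx_scale_gram_add //; last exact: psdmx_gram.
  by rewrite divr_gt0 ?ltr0n.
have Qz : Q *m z = A^T *m b.
  have -> : Q = j%:R^-1 *: (c *: (L^T *m L) + (A^T *m A) *+ j).
    by rewrite scalerDr scalerA -scaler_nat scalerA mulVf // scale1r addrC mulrC.
  by rewrite -scalemxAl Gz -scaler_nat scalerA mulVf // scale1r.
by rewrite /tikh -/Q -Qz mulKmx.
Qed.

End NormalEquations.

Theorem theorem2p3 (R : realFieldType) (m n s l M : nat)
  (A : 'M[R]_(m, n)) (b : 'cV[R]_m) (L : 'M[R]_(s, n))
  (W : 'I_M -> 'M[R]_(m, l)) (tau : nat -> 'I_M) :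
  \rank L = n ->
  \sum_(i < M) W i *m (W i)^T = 1%:M ->
  cyclic_sampling tau ->
  (forall lam : R, 0 < lam ->
     forall j : nat, (1 <= j)%N ->
       yseq A b L W tau lam (j * M) = tikh A L b (lam / j%:R)) /\
  (forall (Lam : nat -> R) (x0 : 'cV[R]_n),
     (forall k : nat, (1 <= k)%N -> 0 < lamseq Lam k) ->
     forall j : nat, (1 <= j)%N ->
       xseq A b L W tau Lam x0 (j * M) = tikh A L b (lamseq Lam (j * M) / j%:R)).
Proof.
move=> rankL frame cyclic; have M_gt0 : (0 < M)%N by case: (tau 0%N) => i; lia.
have sweep j := (AtA_sum_cyclic A frame cyclic j, Atb_sum_cyclic A frame cyclic b j).
split=> [lam lam_gt0 j j_gt0 | Lam x0 lam_gt0 j j_gt0].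
- apply: tikh_of_normal_eq => //; rewrite -(sweep j).1 -(sweep j).2.
  exact: yseq_normal_eq.
- apply: tikh_of_normal_eq => //; first by rewrite lam_gt0 // muln_gt0 j_gt0.
  rewrite -(sweep j).1 -(sweep j).2; exact: xseq_normal_eq.
Qed.
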